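(* Assume $X_t>0$ and $Y_t>0$ for all $t\in\mathcal T$, let $\alpha=\sum_{t}Y_t/X_t$, and for $\delta\in[0,1]$ and a probability vector $\boldsymbol p$ on $\mathcal T$ let $\mathrm{UB}(\delta,\boldsymbol p)=1-\delta+\frac{\delta^2}{2}\sum_tp_t^2\frac{X_t}{Y_t}$. Then $$\min_{\delta\in[0,1],\ \boldsymbol p\in\Delta(\mathcal T)}\mathrm{UB}(\delta,\boldsymbol p)=L(\alpha),$$ attained at $p_t=\frac{Y_t/X_t}{\alpha}$ and $\delta=\min\{\alpha,1\}$. Consequently, in the weakest-link game, any strategy $F^*_{\mathcal Y}\in\mathbb F(\boldsymbol Y)$ whose $c$-marginals are, for all $c$ and $\boldsymbol u\in\mathbb R^T_{\ge0}$, $F^*_{\mathcal Y,c}(\boldsymbol u)=1-\alpha+\alpha\sum_t\frac{Y_t/X_t}{\alpha}\min\{\frac{u_t}{2v_cX_t},1\}$ if $\alpha\le1$, and $F^*_{\mathcal Y,c}(\boldsymbol u)=\sum_t\frac{Y_t/X_t}{\alpha}\min\{\frac{u_t}{2v_cX_t\alpha},1\}$ if $\alpha>1$, satisfies $\pi_{\mathcal X}(F_{\mathcal X},F^*_{\mathcal Y})\le L(\alpha)$ for all $F_{\mathcal X}\in\mathbb F(\boldsymbol X)$.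
   Context: Contests $\mathcal C=\{1,\dots,C\}$ with values $v_c>0$, $\sum_cv_c=1$; types $\mathcal T=\{1,\dots,T\}$; $\Delta(\mathcal T)$ is the set of probability vectors on $\mathcal T$. $\mathbb F(\boldsymbol X)$ is the set of probability distributions $F$ on $\mathbb R^{CT}_{\ge0}$ (points $\mathbf x=(\boldsymbol x_c)_c$, $\boldsymbol x_c=(x_{c,t})_t$) with $\mathbb E_{\mathbf x\sim F}[\sum_cx_{c,t}]\le X_t$ for all $t$; similarly $\mathbb F(\boldsymbol Y)$. $c$-marginal: $F_c(\boldsymbol u)=\mathbb P_{\mathbf x\sim F}[x_{c,t}\le u_t\ \forall t]$. Weakest-link rule $W_{\mathrm{WL}}(\boldsymbol x,\boldsymbol y)=\mathbf 1\{x_t\ge y_t\ \forall t\}$; $\pi_{\mathcal X}(F_{\mathcal X},F_{\mathcal Y})=\mathbb E[\sum_cv_cW_{\mathrm{WL}}(\boldsymbol x_c,\boldsymbol y_c)]$ with independent $\mathbf x\sim F_{\mathcal X}$, $\mathbf y\sim F_{\mathcal Y}$. $L(\alpha)=1-\alpha/2$ for $\alpha\le1$, $L(\alpha)=1/(2\alpha)$ for $\alpha>1$. *)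

From HB Require Import structures.
From mathcomp Require Import all_boot all_order all_algebra.
From mathcomp Require Import all_classical all_reals all_analysis.
Set Implicit Arguments. Unset Strict Implicit. Unset Printing Implicit Defensive.
Import Order.TTheory GRing.Theory Num.Theory.
Local Open Scope classical_set_scope.
Local Open Scope ring_scope.

Definition L_alpha (R : realType) (a : R) : R :=
  if a <= 1 then 1 - a / 2 else 1 / (2 * a).

Definition alpha_of (R : realType) (T : nat) (X Y : 'I_T -> R) : R :=
  \sum_(t < T) Y t / X t.

Definition UB (R : realType) (T : nat) (X Y : 'I_T -> R) (delta : R)
  (p : 'I_T -> R) : R :=
  1 - delta + delta ^+ 2 / 2 * \sum_(t < T) p t ^+ 2 * X t / Y t.

Definition is_prob_vec (R : realType) (T : nat) (p : 'I_T -> R) : Prop :=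
  (forall t, 0 <= p t) /\ \sum_(t < T) p t = 1.

Definition Fstar_marg (R : realType) (C T : nat) (v : 'I_C -> R)
  (X Y : 'I_T -> R) (c : 'I_C) (u : 'I_T -> R) : R :=
  let a := alpha_of X Y in
  if a <= 1 then
    1 - a + a * \sum_(t < T) ((Y t / X t) / a) * Num.min (u t / (2 * v c * X t)) 1
  else
    \sum_(t < T) ((Y t / X t) / a) * Num.min (u t / (2 * v c * X t * a)) 1.

(* A mixed strategy F in F(B) is represented as the law of a random vector
   x = (x_{c,t}) : Omega -> R^{C x T}_{>=0} on a probability space (Omega, P):
   each coordinate measurable, nonnegative, and E[sum_c x_{c,t}] <= B_t. *)
Definition strategy_in (R : realType) (C T : nat) d (Om : measurableType d)
  (P : probability Om R) (x : 'I_C -> 'I_T -> Om -> R) (B : 'I_T -> R) : Prop :=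
  (forall c t, measurable_fun setT (x c t)) /\
  (forall c t w, 0 <= x c t w) /\
  (forall t, (\int[P]_w (\sum_(c < C) x c t w)%:E <= (B t)%:E)%E).

Definition marg_cdf (R : realType) (C T : nat) d (Om : measurableType d)
  (P : probability Om R) (x : 'I_C -> 'I_T -> Om -> R) (c : 'I_C)
  (u : 'I_T -> R) : \bar R :=
  P [set w | forall t, x c t w <= u t].

(* pi_X(F_X, F_Y) = E[ sum_c v_c W_WL(x_c, y_c) ] with x, y independent,
   i.e. sum_c v_c (P x Q)[x_{c,t} >= y_{c,t} for all t] *)
Definition payoffX (R : realType) (C T : nat) (v : 'I_C -> R)
  d1 (Om1 : measurableType d1) (P : probability Om1 R)
  (x : 'I_C -> 'I_T -> Om1 -> R)
  d2 (Om2 : measurableType d2) (Q : probability Om2 R)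
  (y : 'I_C -> 'I_T -> Om2 -> R) : \bar R :=
  (\sum_(c < C) (v c)%:E *
     (P \x Q) [set z | forall t, (y c t z.2 <= x c t z.1)%R])%E.

From HB Require Import structures.
From mathcomp Require Import all_boot all_order all_algebra.
From mathcomp Require Import all_classical all_reals all_analysis.
From mathcomp Require Import measurable_realfun ring lra.
Set Implicit Arguments. Unset Strict Implicit. Unset Printing Implicit Defensive.
Import Order.TTheory GRing.Theory Num.Theory.
Local Open Scope classical_set_scope.
Local Open Scope ring_scope.

(* By Cauchy-Schwarz, sum_t p_t^2 X_t / Y_t >= 1 / alpha on the simplex, with equality
   at p_t = (Y_t / X_t) / alpha, so UB reduces to the one-variable quadratic
   1 - delta + delta^2 / (2 alpha), minimized on [0, 1] at delta = min(alpha, 1).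
   For the payoff, dropping the truncation min(_, 1) bounds each marginal CDF of F*_Y
   by an affine function a + sum_t k_t u_t / v_c.  Contest c is won with probability
   E[F*_{Y,c}(x_c)], so averaging over contests with weights v_c gives
   pi_X <= a + sum_t k_t E[sum_c x_{c,t}] <= a + sum_t k_t X_t, which equals L(alpha). *)

Section Optimization.
Variable R : realType.

Lemma L_alpha_le_quadratic (a s d : R) :
  0 < a -> a^-1 <= s -> 0 <= d <= 1 -> L_alpha a <= 1 - d + d ^+ 2 / 2 * s.
Proof.
move=> a_gt0 s_ge /andP[d_ge0 d_le1].
have r_gt0 : 0 < a^-1 by rewrite invr_gt0.
have ar : a * a^-1 = 1 by rewrite divff // gt_eqF.
have sq_s : d ^+ 2 * a^-1 <= d ^+ 2 * s by rewrite ler_wpM2l ?sqr_ge0.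
rewrite /L_alpha; case: ifP => [a_le1|/negbT]; last first.
  rewrite -ltNge => a_gt1.
  have r_lt1 : a^-1 < 1 by rewrite invf_lt1.
  have -> : 1 / (2 * a) = a^-1 / 2 by rewrite mul1r invfM mulrC.
  (* at [s = 1 / a] the claim is [(1 - d) (2 - (1 + d) / a) >= 0] *)
  have : 0 <= (1 - d) * (2 - (1 + d) * a^-1) by apply: mulr_ge0; nra.
  nra.
(* at [s = 1 / a] the claim is [(d - a)^2 / a >= 0] *)
have := mulr_ge0 (sqr_ge0 (d - a)) (ltW r_gt0).
nra.
Qed.

Lemma L_alpha_minimizer (a : R) :
  0 < a -> 1 - Num.min a 1 + Num.min a 1 ^+ 2 / 2 * a^-1 = L_alpha a.
Proof.
move=> a_gt0; have a_neq0 : a != 0 by rewrite gt_eqF.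
rewrite /L_alpha; case: ifP => [/min_idPl ->|/negbT].
  by field.
by rewrite -ltNge => /ltW/min_idPr ->; field.
Qed.

Section Ratios.
Variables (T : nat) (X Y : 'I_T -> R).
Hypotheses (T_gt0 : (0 < T)%N) (X_gt0 : forall t, 0 < X t) (Y_gt0 : forall t, 0 < Y t).

Lemma alpha_of_gt0 : 0 < alpha_of X Y.
Proof.
rewrite /alpha_of (bigD1 (Ordinal T_gt0)) //= ltr_pwDl ?divr_gt0 //.
by apply: sumr_ge0 => t _; rewrite ltW ?divr_gt0.
Qed.

Let alpha_neq0 : alpha_of X Y != 0. Proof. by rewrite gt_eqF ?alpha_of_gt0. Qed.
Let X_neq0 t : X t != 0. Proof. by rewrite gt_eqF. Qed.
Let Y_neq0 t : Y t != 0. Proof. by rewrite gt_eqF. Qed.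

Lemma is_prob_vec_normalized_ratio :
  is_prob_vec (fun t => (Y t / X t) / alpha_of X Y).
Proof.
split=> [t|]; last by rewrite -mulr_suml divff.
by rewrite !divr_ge0 ?ltW ?alpha_of_gt0.
Qed.

Lemma weighted_sumsq_normalized_ratio :
  \sum_(t < T) ((Y t / X t) / alpha_of X Y) ^+ 2 * X t / Y t = (alpha_of X Y)^-1.
Proof.
rewrite -[RHS]mul1r -(proj2 is_prob_vec_normalized_ratio) mulr_suml.
by apply: eq_bigr => t _; field; rewrite X_neq0 Y_neq0 alpha_neq0.
Qed.

(* Expand [sum_t (p t - q t)^2 X t / Y t >= 0] around the minimizer [q]. *)
Lemma inv_alpha_le_weighted_sumsq (p : 'I_T -> R) :
  \sum_(t < T) p t = 1 ->
  (alpha_of X Y)^-1 <= \sum_(t < T) p t ^+ 2 * X t / Y t.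
Proof.
move=> p_sum1; pose q t := (Y t / X t) / alpha_of X Y.
have expand : \sum_(t < T) (p t - q t) ^+ 2 * X t / Y t =
    \sum_(t < T) p t ^+ 2 * X t / Y t - (alpha_of X Y)^-1.
  transitivity (\sum_(t < T) p t ^+ 2 * X t / Y t
      - 2 * (alpha_of X Y)^-1 * \sum_(t < T) p t
      + (alpha_of X Y)^-1 * \sum_(t < T) q t).
    rewrite !mulr_sumr -sumrB -big_split /=; apply: eq_bigr => t _.
    by rewrite /q; field; rewrite X_neq0 Y_neq0 alpha_neq0.
  by rewrite p_sum1 (proj2 is_prob_vec_normalized_ratio); ring.
rewrite -subr_ge0 -expand; apply: sumr_ge0 => t _.
by apply: divr_ge0; [apply: mulr_ge0; [exact: sqr_ge0 | exact: ltW] | exact: ltW].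
Qed.

End Ratios.
End Optimization.

Section FstarAffineMajorant.
Variables (R : realType) (T : nat) (X Y : 'I_T -> R).
Hypotheses (T_gt0 : (0 < T)%N) (X_gt0 : forall t, 0 < X t) (Y_gt0 : forall t, 0 < Y t).

Definition Fstar_intercept : R :=
  if alpha_of X Y <= 1 then 1 - alpha_of X Y else 0.

Definition Fstar_slope (t : 'I_T) : R :=
  if alpha_of X Y <= 1 then Y t / (2 * X t ^+ 2)
  else Y t / (2 * X t ^+ 2 * alpha_of X Y ^+ 2).

Let alpha_gt0 : 0 < alpha_of X Y. Proof. exact: alpha_of_gt0. Qed.
Let alpha_neq0 : alpha_of X Y != 0. Proof. by rewrite gt_eqF. Qed.
Let X_neq0 t : X t != 0. Proof. by rewrite gt_eqF. Qed.

Lemma Fstar_intercept_ge0 : 0 <= Fstar_intercept.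
Proof. by rewrite /Fstar_intercept; case: ifP => // a_le1; rewrite subr_ge0. Qed.

Lemma Fstar_slope_ge0 t : 0 <= Fstar_slope t.
Proof.
by rewrite /Fstar_slope; case: ifP => _;
  rewrite divr_ge0 ?ltW // ?mulr_gt0 ?exprn_gt0.
Qed.

Lemma Fstar_marg_le_affine (C : nat) (v : 'I_C -> R) c (u : 'I_T -> R) :
  0 < v c -> (forall t, 0 <= u t) ->
  Fstar_marg v X Y c u <= Fstar_intercept + \sum_(t < T) Fstar_slope t / v c * u t.
Proof.
move=> v_gt0 u_ge0; have v_neq0 : v c != 0 by rewrite gt_eqF.
have ratio_ge0 t : 0 <= Y t / X t / alpha_of X Y by rewrite !divr_ge0 ?ltW.
have trunc_le (z : R) : Num.min z 1 <= z by rewrite ge_min lexx.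
rewrite /Fstar_marg /Fstar_intercept /Fstar_slope /=; case: ifP => _.
  rewrite lerD2l mulr_sumr; apply: ler_sum => t _.
  rewrite mulrA [leRHS](_ : _ =
      alpha_of X Y * (Y t / X t / alpha_of X Y) * (u t / (2 * v c * X t))); last first.
    by field; rewrite alpha_neq0 X_neq0 v_neq0.
  by apply: ler_wpM2l => //; rewrite mulr_ge0 // ltW.
rewrite add0r; apply: ler_sum => t _.
rewrite [leRHS](_ : _ =
    Y t / X t / alpha_of X Y * (u t / (2 * v c * X t * alpha_of X Y))); last first.
  by field; rewrite alpha_neq0 X_neq0 v_neq0.
exact: ler_wpM2l.
Qed.

Lemma Fstar_affine_at_budget :
  Fstar_intercept + \sum_(t < T) Fstar_slope t * X t = L_alpha (alpha_of X Y).
Proof.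
rewrite /Fstar_intercept /Fstar_slope /L_alpha; case: ifP => _.
  transitivity (1 - alpha_of X Y + alpha_of X Y / 2); last by field.
  congr (_ + _); rewrite /alpha_of mulr_suml; apply: eq_bigr => t _.
  by field; rewrite X_neq0.
transitivity (alpha_of X Y / (2 * alpha_of X Y ^+ 2)); last by field.
rewrite add0r /alpha_of mulr_suml; apply: eq_bigr => t _.
by field; rewrite X_neq0 alpha_neq0.
Qed.

End FstarAffineMajorant.

Lemma measurable_Fstar_marg (R : realType) (C T : nat) (v : 'I_C -> R)
    (X Y : 'I_T -> R) c d (Om : measurableType d) (f : 'I_T -> Om -> R) :
  (forall t, measurable_fun setT (f t)) ->
  measurable_fun setT (fun w => Fstar_marg v X Y c (fun t => f t w)).
Proof.
move=> mf; have mtrunc (k : 'I_T -> R) t :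
    measurable_fun setT (fun w => Num.min (f t w / k t) 1).
  exact: measurable_minr (measurable_funM (mf t) (measurable_cst _)) (measurable_cst _).
have mcomb (a : 'I_T -> R) (k : 'I_T -> R) :
    measurable_fun setT (fun w => \sum_(t < T) a t * Num.min (f t w / k t) 1).
  by apply: measurable_sum => t; exact: measurable_funM (measurable_cst _) (mtrunc k t).
rewrite /Fstar_marg /=; case: (alpha_of X Y <= 1); last exact: mcomb.
exact: measurable_funD (measurable_cst _) (measurable_funM (measurable_cst _) (mcomb _ _)).
Qed.

Section Integrals.
Variables (R : realType) (d : measure_display) (Om : measurableType d).

Lemma ge0_integral_lincomb (mu : {measure set Om -> \bar R}) (n : nat)
    (k : 'I_n -> R) (f : 'I_n -> Om -> R) :
  (forall i, 0 <= k i) -> (forall i, measurable_fun setT (f i)) ->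
  (forall i w, 0 <= f i w) ->
  (\int[mu]_w (\sum_(i < n) k i * f i w)%:E =
   \sum_(i < n) (k i)%:E * \int[mu]_w (f i w)%:E)%E.
Proof.
move=> k_ge0 mf f_ge0; under eq_integral do rewrite -sumEFin.
rewrite ge0_integral_sum //; last 2 first.
- by move=> i; apply/measurable_EFinP; exact: measurable_funM (measurable_cst _) (mf i).
- by move=> i w _; rewrite lee_fin mulr_ge0.
apply: eq_bigr => i _; rewrite -ge0_integralZl_EFin //.
- by move=> w _; rewrite lee_fin.
- exact/measurable_EFinP.
Qed.

Lemma integral_cstDl (P : probability Om R) (a : R) (f : Om -> R) :
  0 <= a -> measurable_fun setT f -> (forall w, 0 <= f w) ->
  (\int[P]_w (a + f w)%:E = a%:E + \int[P]_w (f w)%:E)%E.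
Proof.
move=> a_ge0 mf f_ge0; under eq_integral do rewrite EFinD.
rewrite ge0_integralD //.
- by rewrite integral_cst // [X in (_ * X)%E]probability_setT mule1.
- by move=> w _; rewrite lee_fin.
- exact/measurable_EFinP.
Qed.

End Integrals.

Section WeakestLinkPayoff.
Variables (R : realType) (C T : nat) (v : 'I_C -> R).
Variables (d1 : measure_display) (Om1 : measurableType d1) (P : probability Om1 R).
Variables (d2 : measure_display) (Om2 : measurableType d2) (Q : probability Om2 R).
Variables (x : 'I_C -> 'I_T -> Om1 -> R) (y : 'I_C -> 'I_T -> Om2 -> R).

Lemma win_prob_integral_marg_cdf c :
  ((P \x Q) [set z | forall t, (y c t z.2 <= x c t z.1)%R] =
   \int[P]_w marg_cdf Q y c (fun t => x c t w))%E.
Proof.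
rewrite /product_measure1 /=; apply: eq_integral => w _.
by congr (Q _); rewrite /xsection; apply/seteqP; split => z /=; rewrite in_setE.
Qed.

Lemma payoffX_le_affine (B : 'I_T -> R) (F : 'I_C -> ('I_T -> R) -> R)
    (a : R) (k : 'I_T -> R) :
  (forall c, 0 < v c) -> \sum_(c < C) v c = 1 -> strategy_in P x B ->
  (forall c u, (forall t, 0 <= u t) -> marg_cdf Q y c u = (F c u)%:E) ->
  (forall c, measurable_fun setT (fun w => F c (fun t => x c t w))) ->
  0 <= a -> (forall t, 0 <= k t) ->
  (forall c u, (forall t, 0 <= u t) -> F c u <= a + \sum_(t < T) k t / v c * u t) ->
  (payoffX v P x Q y <= (a + \sum_(t < T) k t * B t)%:E)%E.
Proof.
move=> v_gt0 v_sum1 [mx [x_ge0 x_budget]] margF mF a_ge0 k_ge0 F_le.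
pose g c w := a + \sum_(t < T) k t / v c * x c t w.
pose S t w := \sum_(c < C) x c t w.
have mS t : measurable_fun setT (S t) by apply: measurable_sum => c; exact: mx.
have S_ge0 t w : 0 <= S t w by apply: sumr_ge0.
have slope_ge0 c t : 0 <= k t / v c by rewrite divr_ge0 // ltW.
have mlin c : measurable_fun setT (fun w => \sum_(t < T) k t / v c * x c t w).
  by apply: measurable_sum => t; exact: measurable_funM (measurable_cst _) (mx c t).
have lin_ge0 c w : 0 <= \sum_(t < T) k t / v c * x c t w.
  by apply: sumr_ge0 => t _; rewrite mulr_ge0.
have win_le c : ((P \x Q) [set z | forall t, (y c t z.2 <= x c t z.1)%R] <=
    \int[P]_w (g c w)%:E)%E.
  rewrite win_prob_integral_marg_cdf; apply: ge0_le_integral => //.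
  - by rewrite (funext (fun w => margF c _ (fun t => x_ge0 c t w))); exact/measurable_EFinP.
  - exact/measurable_EFinP/measurable_funD.
  - by move=> w _; rewrite margF // lee_fin F_le.
have mix w : \sum_(c < C) v c * g c w = a + \sum_(t < T) k t * S t w.
  rewrite /g /S; under eq_bigr => c _ do rewrite mulrDr mulr_sumr.
  rewrite big_split /= -mulr_suml v_sum1 mul1r; congr (_ + _).
  rewrite exchange_big /=; apply: eq_bigr => t _; rewrite mulr_sumr.
  by apply: eq_bigr => c _; field; rewrite gt_eqF.
apply: (@le_trans _ _ (\sum_(c < C) (v c)%:E * \int[P]_w (g c w)%:E)%E).
  by apply: lee_sum => c _; apply: lee_wpmul2l; [rewrite lee_fin ltW | exact: win_le].
rewrite -ge0_integral_lincomb; last 3 first.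
- by move=> c; rewrite ltW.
- by move=> c; exact: measurable_funD.
- by move=> c w; rewrite addr_ge0.
under eq_integral do rewrite mix.
rewrite integral_cstDl //; last 2 first.
- by apply: measurable_sum => t; exact: measurable_funM (measurable_cst _) (mS t).
- by move=> w; apply: sumr_ge0 => t _; rewrite mulr_ge0.
rewrite ge0_integral_lincomb // EFinD -sumEFin; apply: leeD2l; apply: lee_sum => t _.
by rewrite EFinM; apply: lee_wpmul2l; [rewrite lee_fin | exact: x_budget].
Qed.

End WeakestLinkPayoff.

Theorem lemma4 (R : realType) (C T : nat) (v : 'I_C -> R) (X Y : 'I_T -> R) :
  (0 < T)%N ->
  (forall c, 0 < v c) -> \sum_(c < C) v c = 1 ->
  (forall t, 0 < X t) -> (forall t, 0 < Y t) ->
  let alph := alpha_of X Y in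
  let pstar := fun t => (Y t / X t) / alph in
  (is_prob_vec pstar /\ 0 <= Num.min alph 1 <= 1 /\
   UB X Y (Num.min alph 1) pstar = L_alpha alph /\
   (forall (delta : R) (p : 'I_T -> R), 0 <= delta <= 1 -> is_prob_vec p ->
      L_alpha alph <= UB X Y delta p)) /\
  (forall d2 (Om2 : measurableType d2) (Q : probability Om2 R)
          (y : 'I_C -> 'I_T -> Om2 -> R),
     strategy_in Q y Y ->
     (forall c (u : 'I_T -> R), (forall t, 0 <= u t) ->
        marg_cdf Q y c u = (Fstar_marg v X Y c u)%:E) ->
     forall d1 (Om1 : measurableType d1) (P : probability Om1 R)
            (x : 'I_C -> 'I_T -> Om1 -> R),
       strategy_in P x X ->
       (payoffX v P x Q y <= (L_alpha alph)%:E)%E).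
Proof.
move=> T_gt0 v_gt0 v_sum1 X_gt0 Y_gt0 alph pstar.
have alpha_gt0 : 0 < alph := alpha_of_gt0 T_gt0 X_gt0 Y_gt0.
split; [split; [|split; [|split]]|].
- exact: is_prob_vec_normalized_ratio.
- by rewrite le_min ge_min lexx orbT ler01 ltW.
- by rewrite /UB /pstar /alph weighted_sumsq_normalized_ratio // L_alpha_minimizer.
- move=> delta p delta01 [_ p_sum1]; apply: L_alpha_le_quadratic => //.
  exact: inv_alpha_le_weighted_sumsq.
- move=> d2 Om2 Q y _ margF d1 Om1 P x x_strat.
  rewrite -(Fstar_affine_at_budget T_gt0 X_gt0 Y_gt0).
  apply: (payoffX_le_affine v_gt0 v_sum1 x_strat margF).
  + by move=> c; apply: measurable_Fstar_marg => t; exact: x_strat.1.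
  + exact: Fstar_intercept_ge0.
  + exact: Fstar_slope_ge0.
  + by move=> c u; exact: Fstar_marg_le_affine.
Qed.
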